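(* Let $f:X\to Y$ be a quasi-isometry of semimetric spaces. Then $f$ maps each $\sim$-class of $X$ quasi-isometrically into a $\sim$-class of $Y$, and this induces an isomorphism of partially ordered sets $X/\!\sim\ \to\ Y/\!\sim$.
   Context: A semimetric space is a set $X$ with $d:X\times X\to\mathbb{R}^{\ge0}\cup\{\infty\}$ such that $d(x,y)=0$ iff $x=y$ and $d(x,z)\le d(x,y)+d(y,z)$ (no symmetry assumed; arithmetic with $\infty$ as usual). A map $f:X\to Y$ is a quasi-isometry if there are constants $1\le\lambda<\infty$, $0<\epsilon<\infty$, $0\le\mu<\infty$ with $\frac1\lambda d(x,y)-\epsilon\le d(f(x),f(y))\le\lambda d(x,y)+\epsilon$ for all $x,y\in X$ and, for every $y\in Y$, some $x\in X$ with $\max(d(y,f(x)),d(f(x),y))\le\mu$. On a semimetric space define the preorder $x\lesssim y$ iff $d(y,x)<\infty$, and $x\sim y$ iff $x\lesssim y$ and $y\lesssim x$; the $\sim$-classes are the strongly connected components, and $X/\!\sim$ is the set of $\sim$-classes partially ordered by the order induced from $\lesssim$. *)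

From HB Require Import structures.
From mathcomp Require Import all_boot all_order all_algebra.
From mathcomp Require Import boolp classical_sets reals constructive_ereal.
Set Implicit Arguments. Unset Strict Implicit. Unset Printing Implicit Defensive.
Import Order.TTheory GRing.Theory Num.Theory.
Local Open Scope classical_set_scope.
Local Open Scope ereal_scope.

(* A semimetric d : X -> X -> [0, +oo] (no symmetry assumed). *)
Record semimetric (R : realType) (X : Type) (d : X -> X -> \bar R) : Prop := {
  sm_ge0 : forall x y, 0 <= d x y ;
  sm_eq0 : forall x y, d x y = 0 <-> x = y ;
  sm_tri : forall x y z, d x z <= d x y + d y z }.

Definition qi_on (R : realType) (X Y : Type) (dX : X -> X -> \bar R)
  (dY : Y -> Y -> \bar R) (A : set X) (B : set Y) (f : X -> Y) : Prop :=
  (forall x, A x -> B (f x)) /\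
  exists lam eps mu : R, (1 <= lam)%R /\ (0 < eps)%R /\ (0 <= mu)%R /\
    (forall x y, A x -> A y ->
       (lam^-1)%:E * dX x y - eps%:E <= dY (f x) (f y) /\
       dY (f x) (f y) <= lam%:E * dX x y + eps%:E) /\
    (forall y, B y -> exists x, A x /\
       Order.max (dY y (f x)) (dY (f x) y) <= mu%:E).

Definition quasi_isometry (R : realType) (X Y : Type) (dX : X -> X -> \bar R)
  (dY : Y -> Y -> \bar R) (f : X -> Y) : Prop := qi_on dX dY setT setT f.

Definition preceq (R : realType) (X : Type) (d : X -> X -> \bar R) (x y : X) :
  Prop := d y x < +oo.
Definition sim (R : realType) (X : Type) (d : X -> X -> \bar R) (x y : X) :
  Prop := preceq d x y /\ preceq d y x.

Definition cls (R : realType) (X : Type) (d : X -> X -> \bar R) (x : X) : set X :=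
  [set y | sim d x y].

Definition quot (R : realType) (X : Type) (d : X -> X -> \bar R) :=
  {C : set X | exists x, C = cls d x}.

Definition mk_cls (R : realType) (X : Type) (d : X -> X -> \bar R) (x : X) :
  quot d := exist _ (cls d x) (ex_intro _ x erefl).

Definition quot_le (R : realType) (X : Type) (d : X -> X -> \bar R)
  (C D : quot d) : Prop :=
  exists x y, proj1_sig C x /\ proj1_sig D y /\ preceq d x y.

From mathcomp Require Import all_boot all_order all_algebra.
From mathcomp Require Import boolp classical_sets reals constructive_ereal.
Import Order.TTheory GRing.Theory Num.Theory.

(* A quasi-isometry changes distances by an affine amount, so it preserves
   (and reflects) the finiteness of d(x,y): f preserves and reflects the
   preorder, hence ~, and every point of Y lies at finite distance both ways
   from some f x.  Thus x |-> [f x] is a well-defined, order-preserving and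
   order-reflecting surjection X/~ -> Y/~, injective because ~ is reflected. *)

Local Open Scope ereal_scope.

Lemma inj_surj_bijective (A B : Type) (g : A -> B) :
  injective g -> (forall b, exists a, g a = b) -> bijective g.
Proof.
move=> g_inj g_surj; exists (fun b => projT1 (cid (g_surj b))).
  by move=> a; apply: g_inj; rewrite (projT2 (cid (g_surj (g a)))).
by move=> b; rewrite (projT2 (cid (g_surj b))).
Qed.

Lemma affine_upper_bound_lty (R : realType) (lam eps : R) (a b : \bar R) :
  0 <= a -> a < +oo -> b <= lam%:E * a + eps%:E -> b < +oo.
Proof.
case: a => [r| |] // _ _ b_le; apply: le_lt_trans b_le _.
by rewrite -EFinM -EFinD ltry.
Qed.

Lemma affine_lower_bound_lty (R : realType) (lam eps : R) (a b : \bar R) :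
  (0 < lam)%R -> (lam^-1)%:E * a - eps%:E <= b -> b < +oo -> a < +oo.
Proof.
move=> lam_gt0; case: a => [r| |] //; first by rewrite ltry.
rewrite mulry gtr0_sg ?invr_gt0 // mul1e /= => b_ge b_lty.
by have := le_lt_trans b_ge b_lty; rewrite ltxx.
Qed.

Section SemimetricQuotient.

Context {R : realType} {X : Type} {d : X -> X -> \bar R}.
Hypothesis sd : semimetric d.

Lemma preceq_refl (x : X) : preceq d x x.
Proof. by rewrite /preceq (proj2 (sm_eq0 sd x x) erefl) ltry. Qed.

Lemma preceq_trans {x y z : X} : preceq d x y -> preceq d y z -> preceq d x z.
Proof.
move=> xy yz; apply: le_lt_trans (sm_tri sd z y x) _.
exact: lte_add_pinfty.
Qed.

Lemma sim_refl (x : X) : sim d x x.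
Proof. by split; apply: preceq_refl. Qed.

Lemma sim_sym {x y : X} : sim d x y -> sim d y x.
Proof. by case. Qed.

Lemma sim_trans {x y z : X} : sim d x y -> sim d y z -> sim d x z.
Proof.
by move=> [xy yx] [yz zy]; split; [apply: preceq_trans xy yz |
  apply: preceq_trans zy yx].
Qed.

Lemma quot_eq (C D : quot d) : proj1_sig C = proj1_sig D -> C = D.
Proof.
by case: C D => [C C_cls] [D D_cls] /= CD; subst D; congr exist;
  apply: Prop_irrelevance.
Qed.

Lemma mk_cls_eq (x y : X) : mk_cls d x = mk_cls d y <-> sim d x y.
Proof.
split=> [/(congr1 (@proj1_sig _ _)) /= xy | xy].
  by have : cls d y y := sim_refl y; rewrite -xy.
apply: quot_eq; apply/seteqP; split=> z /=.
  exact: sim_trans (sim_sym xy).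
exact: sim_trans xy.
Qed.

Definition quot_repr (C : quot d) : X := projT1 (cid (proj2_sig C)).

Lemma quot_reprK (C : quot d) : mk_cls d (quot_repr C) = C.
Proof. by apply: quot_eq; rewrite /= -(projT2 (cid (proj2_sig C))). Qed.

Lemma quot_le_mk_cls (x y : X) :
  quot_le (mk_cls d x) (mk_cls d y) <-> preceq d x y.
Proof.
split=> [[x' [y' [/= [xx' _] [/= [_ y'y] x'y']]]] | xy].
  exact: preceq_trans xx' (preceq_trans x'y' y'y).
by exists x, y; split; [apply: sim_refl | split; [apply: sim_refl |]].
Qed.

End SemimetricQuotient.

Section QuasiIsometry.

Context {R : realType} {X Y : Type}.
Variables (dX : X -> X -> \bar R) (dY : Y -> Y -> \bar R) (f : X -> Y).
Hypotheses (sX : semimetric dX) (sY : semimetric dY).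
Hypothesis qi_f : quasi_isometry dX dY f.

Lemma qi_preceq (x x' : X) : preceq dX x x' <-> preceq dY (f x) (f x').
Proof.
have [_ [lam [eps [mu [lam_ge1 [_ [_ [qi_bound _]]]]]]]] := qi_f.
have [lower upper] := qi_bound x' x I I.
split=> [xx'|fxx'].
  exact: affine_upper_bound_lty (sm_ge0 sX x' x) xx' upper.
by apply: affine_lower_bound_lty lower fxx'; apply: lt_le_trans lam_ge1.
Qed.

Lemma qi_sim (x x' : X) : sim dX x x' <-> sim dY (f x) (f x').
Proof. by rewrite /sim !qi_preceq. Qed.

Lemma qi_sim_image (y : Y) : exists x, sim dY y (f x).
Proof.
have [_ [lam [eps [mu [_ [_ [_ [_ qi_dense]]]]]]]] := qi_f.
have [x [_]] := qi_dense y I; rewrite ge_max => /andP[yfx fxy].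
by exists x; split; apply: le_lt_trans (ltry mu).
Qed.

Lemma qi_on_cls (x : X) : qi_on dX dY (cls dX x) (cls dY (f x)) f.
Proof.
have [_ [lam [eps [mu [lam_ge1 [eps_gt0 [mu_ge0 [qi_bound qi_dense]]]]]]]] :=
  qi_f.
split=> [x' /qi_sim // | ].
exists lam, eps, mu; do 3 split=> //; split=> [x1 x2 _ _ | y fx_y].
  exact: qi_bound.
have [x' [_ y_near]] := qi_dense y I; exists x'; split=> //.
apply/qi_sim; apply: sim_trans fx_y _ => //.
move: y_near; rewrite ge_max => /andP[yfx fxy].
by split; apply: le_lt_trans (ltry mu).
Qed.

Definition quot_map (C : quot dX) : quot dY := mk_cls dY (f (quot_repr C)).

Lemma quot_map_mk_cls (x : X) : quot_map (mk_cls dX x) = mk_cls dY (f x).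
Proof.
apply/(mk_cls_eq sY)/qi_sim/(mk_cls_eq sX).
exact: quot_reprK.
Qed.

Lemma quot_map_bijective : bijective quot_map.
Proof.
apply: inj_surj_bijective => [C D | D].
  rewrite /quot_map => /(mk_cls_eq sY) /qi_sim /(mk_cls_eq sX).
  by rewrite !quot_reprK.
have [x y_fx] := qi_sim_image (quot_repr D).
exists (mk_cls dX x); rewrite quot_map_mk_cls -(quot_reprK D).
exact/(mk_cls_eq sY)/sim_sym.
Qed.

Lemma quot_le_map (C D : quot dX) :
  quot_le C D <-> quot_le (quot_map C) (quot_map D).
Proof.
rewrite -(quot_reprK C) -(quot_reprK D) !quot_map_mk_cls.
by rewrite !quot_le_mk_cls // qi_preceq.
Qed.

End QuasiIsometry.

Theorem proposition4p4 (R : realType) (X Y : Type)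
  (dX : X -> X -> \bar R) (dY : Y -> Y -> \bar R) (f : X -> Y) :
  semimetric dX -> semimetric dY -> quasi_isometry dX dY f ->
  (forall x : X, exists y : Y, qi_on dX dY (cls dX x) (cls dY y) f) /\
  exists F : quot dX -> quot dY,
    (forall x : X, F (mk_cls dX x) = mk_cls dY (f x)) /\
    bijective F /\
    (forall C D : quot dX, quot_le C D <-> quot_le (F C) (F D)).
Proof.
move=> sX sY qi_f; split=> [x | ].
  by exists (f x); apply: qi_on_cls.
exists (quot_map dX dY f); split; first exact: quot_map_mk_cls.
split; first exact: quot_map_bijective.
exact: quot_le_map.
Qed.
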